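(* Fix $C<1$ and let $\delta=\delta(C)=C-1-\log C>0$. Fix $M>\frac{1}{\delta}$ and fix $\theta<\min(M\delta-1,1)$. Then there is a positive constant $L_1$ such that \[ \mathbb{P}\Big(\bigcap_{1\le j\le n}\{\#\mathcal{E}_j\le M\log n\}\Big)\ \ge\ 1-\frac{1}{n^{\theta}} \] for all $n\ge L_1$.
   Context: Let $C>0$ be a constant and $(\alpha_n)_{n\ge1}$ a sequence of nonnegative reals with $\alpha_n\to0$. For each $n$, consider the complete graph $K_n$ on vertex set $\{1,\dots,n\}$; each edge $e$ of $K_n$ is independently open with probability $p_n(e)$ and closed otherwise, where $\frac{C-\alpha_n}{n}\le p_n(e)\le\frac{C+\alpha_n}{n}$ for every edge $e$. Let $G$ be the resulting random graph of open edges, with probability measure $\mathbb{P}$. For a vertex $i$, $\mathcal{E}_i$ denotes the open component of $G$ containing $i$ (the set of vertices joined to $i$ by a path of open edges, together with $i$ itself), and $\#\mathcal{E}_i$ its number of vertices. $\log$ is the natural logarithm. *)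

From HB Require Import structures.
From mathcomp Require Import all_boot all_order all_algebra.
From mathcomp Require Import all_classical all_reals all_analysis.
Set Implicit Arguments. Unset Strict Implicit. Unset Printing Implicit Defensive.
Import Order.TTheory GRing.Theory Num.Theory.
Local Open Scope ring_scope.

(* Edges of the complete graph K_n on 'I_n: unordered pairs {i,j}, i <> j,
   represented canonically as pairs (i, j) with i < j. *)
Definition edge (n : nat) := {e : 'I_n * 'I_n | (e.1 < e.2)%N}.

(* An edge configuration: omega e = true iff edge e is open. *)
Definition config (n : nat) := {ffun edge n -> bool}.

Definition adj (n : nat) (w : config n) : rel 'I_n :=
  fun i j => [exists e : edge n,
    w e && ((((val e).1 == i) && ((val e).2 == j)) ||
            (((val e).1 == j) && ((val e).2 == i)))].

Definition open_cluster (n : nat) (w : config n) (i : 'I_n) : {set 'I_n} :=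
  [set j | connect (adj w) i j].

Definition weight (R : realType) (n : nat) (p : edge n -> R) (w : config n) : R :=
  \prod_(e : edge n) (if w e then p e else 1 - p e).

Definition Prob (R : realType) (n : nat) (p : edge n -> R) (A : pred (config n)) : R :=
  \sum_(w : config n | A w) weight p w.

From HB Require Import structures.
From mathcomp Require Import all_boot all_order all_algebra.
From mathcomp Require Import all_classical all_reals all_analysis.
From mathcomp Require Import zify ring lra.
Import Order.TTheory GRing.Theory Num.Theory numFieldNormedType.Exports.
Local Open Scope ring_scope.
Set Implicit Arguments. Unset Strict Implicit. Unset Printing Implicit Defensive.

(** Explore the open cluster of a vertex one active vertex [a] at a time: [a]
  reveals its open edges towards the unexplored vertices, which yields at most
  Binomial(n, c/n) new active vertices once [n p <= c].  With
  [d = c - 1 - ln c], [s = e^d] and [h = e^(1-c)] we have [s h = 1/c] and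
  [E[(1/c)^X] <= e^(c (1/c - 1)) = h] for such a binomial [X].  The revealed
  edges are independent of everything explored before, so induction along the
  exploration gives [E[s^#explored] <= h^#active], hence
  [E[e^(d |E_v|)] <= s h = 1/c].  Markov's inequality and a union bound over the
  [n] vertices bound the probability of a cluster larger than [M log n] by
  [n^(1 - d M) / c].  Since [d] tends to [C - 1 - log C] as [c] decreases to
  [C], some [c > C] still has [d M - 1 > theta]; for large [n] we then have
  [alpha n <= c - C] and [n^(1 - d M) / c <= n^(-theta)]. *)

Lemma connect_closed_pred (T : finType) (e : rel T) (P : pred T) x y :
  (forall z z', P z -> e z z' -> P z') -> P x -> connect e x y -> P y.
Proof.
move=> closedP + /connectP[q]; elim: q x => [|z q IHq] x Px /=; first by move=> _ ->.
by case/andP=> exz pz; apply: IHq (closedP _ _ Px exz) pz.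
Qed.

Section Exploration.
Variables (T : finType) (r : rel T).
Implicit Types (a b u : T) (A B U V : {set T}).

Definition nbr a U := [set u in U | r a u].

Definition within A U : rel T := fun x y => [&& x \in A :|: U, y \in U & r x y].

(* With active set [A] and unexplored set [U], [explore A U] is the part of the
   clusters of [A] that remains to be discovered. *)
Definition explore A U := [set u in U | [exists b in A, connect (within A U) b u]].

Lemma nbr_sub a U : nbr a U \subset U.
Proof. by apply/fintype.subsetP => u; rewrite inE => /andP[]. Qed.

Lemma explore_sub A U : explore A U \subset U.
Proof. by apply/fintype.subsetP => u; rewrite inE => /andP[]. Qed.

Lemma explore0 U : explore finset.set0 U = finset.set0.
Proof.
by apply/setP => u; rewrite !inE; case: exists_inP => [[b]|]; rewrite ?inE ?andbF.
Qed.

Lemma explore_succ A U x y :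
  x \in A :|: explore A U -> y \in U -> r x y -> y \in explore A U.
Proof.
move=> xAE yU rxy; rewrite inE yU /=.
have xAU : x \in A :|: U.
  by move: xAE; rewrite !inE => /orP[->//|/andP[-> _]]; rewrite orbT.
have xy : within A U x y by rewrite /within xAU yU.
move: xAE; rewrite inE => /orP[xA|]; first by apply/exists_inP; exists x => //; apply: connect1.
rewrite inE => /andP[_ /exists_inP[b bA bx]].
by apply/exists_inP; exists b => //; apply: connect_trans bx (connect1 xy).
Qed.

Lemma explore_from_explored A U B V : [disjoint A & U] ->
  B \subset A :|: explore A U -> V \subset U -> explore B V \subset explore A U.
Proof.
move=> dAU sB sV; apply/fintype.subsetP => u; rewrite inE => /andP[uV /exists_inP[b bB bu]].
have : u \in A :|: explore A U.
  apply: (connect_closed_pred (P := [in A :|: explore A U]) _ (fintype.subsetP sB b bB) bu).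
  move=> z z' zAE /and3P[_ z'V zz'].
  by rewrite inE (explore_succ zAE (fintype.subsetP sV z' z'V) zz') orbT.
by rewrite inE (disjointFl dAU (fintype.subsetP sV u uV)).
Qed.

Section Step.
Variables (a : T) (A U : {set T}).
Hypotheses (aA : a \in A) (dAU : [disjoint A & U]).

Let N := nbr a U.
Let A' := A :\ a :|: N.
Let U' := U :\: N.

Lemma explore_step : explore A U = N :|: explore A' U'.
Proof.
apply/eqP; rewrite finset.eqEsubset; apply/andP; split; last first.
  rewrite finset.subUset; apply/andP; split.
    apply/fintype.subsetP => u; rewrite inE => /andP[uU au].
    by apply: explore_succ au; rewrite // inE aA.
  apply: explore_from_explored => //; last exact: finset.subsetDl.
  apply/fintype.subsetP => x /setUP[/setD1P[_ xA]|]; first by rewrite inE xA.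
  rewrite inE => /andP[xU ax]; rewrite inE (explore_succ _ xU ax) ?orbT //.
  by rewrite inE aA.
apply/fintype.subsetP => u; rewrite inE => /andP[uU /exists_inP[b bA bu]].
suff : u \in A :|: (N :|: explore A' U') by rewrite inE (disjointFl dAU uU).
have bP : b \in A :|: (N :|: explore A' U') by rewrite inE bA.
apply: (connect_closed_pred (P := [in A :|: (N :|: explore A' U')]) _ bP bu).
move=> z z' zP /and3P[_ z'U zz']; rewrite !finset.in_setU.
case z'N: (z' \in N); first by rewrite orbT.
have z'U' : z' \in U' by rewrite finset.in_setD z'N z'U.
suff /explore_succ/(_ z'U' zz') -> : z \in A' :|: explore A' U' by rewrite !orbT.
move: zP; rewrite !finset.in_setU => /or3P[zA|zN|->]; last by rewrite orbT.
  case: (eqVneq z a) => [eza|zna]; last by rewrite finset.in_setD1 zna zA.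
  by move: z'N; rewrite inE z'U -eza zz'.
by rewrite zN orbT.
Qed.

Lemma card_explore_step : #|explore A U| = (#|N| + #|explore A' U'|)%N.
Proof.
rewrite explore_step; apply/eqP; rewrite (leq_card_setU _ _).2 -setI_eq0.
apply/eqP/setP => u; rewrite finset.in_setI finset.in_set0.
by apply/andP => -[uN /(fintype.subsetP (explore_sub _ _))]; rewrite finset.in_setD uN.
Qed.

End Step.

Lemma cluster_sub_explore v :
  [set j | connect r v j] \subset v |: explore [set v] (~: [set v]).
Proof.
apply/fintype.subsetP => j; rewrite inE.
apply: (connect_closed_pred (P := [in v |: explore [set v] (~: [set v])])); last exact: setU11.
move=> z z' zE zz' /=; rewrite finset.in_setU1; case: eqVneq => //= z'v.
by apply: explore_succ zz'; rewrite // !inE.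
Qed.

End Exploration.

Lemma explore_eq_rel (T : finType) (r r' : rel T) (A U : {set T}) :
  (forall x y, x \in A :|: U -> y \in U -> r x y = r' x y) ->
  explore r A U = explore r' A U.
Proof.
move=> rr'; have E : within r A U =2 within r' A U.
  by move=> x y; rewrite /within; case xAU: (_ \in _); case yU: (_ \in _); rewrite //= rr'.
by apply/setP => u; rewrite !inE; under eq_existsb => b do rewrite (eq_connect E).
Qed.

Section BernoulliProduct.
Variables (R : realType) (n : nat) (p : edge n -> R).
Hypothesis p01 : forall e, 0 <= p e <= 1.
Implicit Types (w : config n) (f g : config n -> R).

Definition expect f := \sum_w weight p w * f w.

Lemma weight_ge0 w : 0 <= weight p w.
Proof.
apply: prodr_ge0 => e _; have /andP[p0 p1] := p01 e.
by case: (w e); rewrite ?subr_ge0.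
Qed.

Lemma Prob_expect (A : pred (config n)) : Prob p A = expect (fun w => (A w)%:R).
Proof.
rewrite /Prob /expect big_mkcond; apply: eq_bigr => w _.
by case: (A w); rewrite ?mulr1 ?mulr0.
Qed.

Lemma expect_prod (phi : edge n -> bool -> R) :
  expect (fun w => \prod_e phi e (w e)) =
  \prod_e (p e * phi e true + (1 - p e) * phi e false).
Proof.
rewrite /expect /weight.
transitivity (\sum_(w : config n)
  \prod_(e : edge n) ((if w e then p e else 1 - p e) * phi e (w e))).
  by apply: eq_bigr => w _; rewrite -big_split.
rewrite -(bigA_distr_bigA (fun e b => (if b then p e else 1 - p e) * phi e b)).
by apply: eq_bigr => e _; rewrite big_bool /= addrC.
Qed.

Lemma expect1 : expect (fun=> 1) = 1.
Proof.
have -> : (fun=> 1) = (fun w : config n => \prod_(e : edge n) (1 : R)).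
  by apply: funext => w; rewrite big1_eq.
by rewrite (expect_prod (fun _ _ => 1)) big1 // => e _; rewrite !mulr1 subrKC.
Qed.

Lemma expect_ge0 f : (forall w, 0 <= f w) -> 0 <= expect f.
Proof. by move=> f0; apply: sumr_ge0 => w _; rewrite mulr_ge0 ?weight_ge0. Qed.

Lemma ler_expect f g : (forall w, f w <= g w) -> expect f <= expect g.
Proof. by move=> fg; apply: ler_sum => w _; apply: ler_wpM2l; [apply: weight_ge0 | apply: fg]. Qed.

Lemma expectZ c f : expect (fun w => c * f w) = c * expect f.
Proof. by rewrite /expect mulr_sumr; apply: eq_bigr => w _; rewrite mulrCA. Qed.

Lemma expect1B f : expect (fun w => 1 - f w) = 1 - expect f.
Proof.
rewrite -[in RHS]expect1 /expect -sumrB.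
by apply: eq_bigr => w _; rewrite mulrBr mulr1.
Qed.

Lemma expect_sum (I : finType) (P : pred I) (F : I -> config n -> R) :
  expect (fun w => \sum_(i | P i) F i w) = \sum_(i | P i) expect (F i).
Proof. by rewrite /expect exchange_big; apply: eq_bigr => w _; rewrite mulr_sumr. Qed.

Lemma expect_partition (I : finType) (K : config n -> I) (P : pred I) f :
  (forall w, P (K w)) ->
  expect f = \sum_(k | P k) expect (fun w => (K w == k)%:R * f w).
Proof.
move=> PK; rewrite -expect_sum; apply: eq_bigr => w _.
rewrite (bigD1 (K w)) //= eqxx mul1r big1 ?addr0 // => k /andP[_ /negbTE].
by rewrite eq_sym => ->; rewrite mul0r.
Qed.

Lemma expectZr f c : expect (fun w => f w * c) = expect f * c.
Proof. by rewrite mulrC -expectZ; under eq_fun => w do rewrite mulrC. Qed.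

Lemma expect_indicator_eq (I : eqType) (K : config n -> I) k f g :
  (forall w, K w = k -> f w = g w) ->
  expect (fun w => (K w == k)%:R * f w) = expect (fun w => (K w == k)%:R * g w).
Proof.
move=> fg; rewrite /expect; apply: eq_bigr => w _.
by case: eqP => [/fg->|_]; rewrite ?mul0r.
Qed.

Definition merge (D : pred (edge n)) w1 w2 : config n :=
  [ffun e => if D e then w1 e else w2 e].

Lemma weight_merge D w1 w2 :
  weight p w1 * weight p w2 = weight p (merge D w1 w2) * weight p (merge D w2 w1).
Proof.
rewrite /weight -!big_split; apply: eq_bigr => e _ /=.
by rewrite !ffunE; case: (D e); rewrite // mulrC.
Qed.

Lemma expect_mul_indep (D : pred (edge n)) f g :
  (forall w w', (forall e, D e -> w e = w' e) -> f w = f w') ->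
  (forall w w', (forall e, ~~ D e -> w e = w' e) -> g w = g w') ->
  expect (fun w => f w * g w) = expect f * expect g.
Proof.
move=> fD gD; pose swap x := (merge D x.1 x.2, merge D x.2 x.1).
have swapK : involutive swap.
  move=> [w1 w2]; congr pair; apply/ffunP => e; rewrite !ffunE /=; by case: (D e).
have -> : expect f * expect g =
    \sum_(x : config n * config n) weight p x.1 * weight p x.2 * (f x.1 * g x.2).
  rewrite -(pair_bigA _ (fun w1 w2 => weight p w1 * weight p w2 * (f w1 * g w2))).
  rewrite /expect mulr_suml; apply: eq_bigr => w1 _.
  by rewrite mulr_sumr; apply: eq_bigr => w2 _; rewrite mulrACA.
have -> : expect (fun w => f w * g w) =
    \sum_(x : config n * config n) weight p x.1 * weight p x.2 * (f x.1 * g x.1).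
  rewrite -(pair_bigA _ (fun w1 w2 => weight p w1 * weight p w2 * (f w1 * g w1))).
  rewrite -[LHS]mulr1 -expect1 /expect mulr_suml; apply: eq_bigr => w1 _.
  by rewrite mulr_sumr; apply: eq_bigr => w2 _; rewrite mulr1 mulrAC.
rewrite [RHS](reindex_inj (inv_inj swapK)); apply: eq_bigr => -[w1 w2] _ /=.
rewrite -weight_merge (fD (merge D w1 w2) w1) => [|e De]; last by rewrite ffunE De.
by rewrite (gD (merge D w2 w1) w1) => // e De; rewrite ffunE (negbTE De).
Qed.

End BernoulliProduct.

Section CompleteGraph.
Variable n : nat.
Implicit Types (w : config n) (a i j u : 'I_n) (e : edge n) (A U : {set 'I_n}).

Definition joins e i j :=
  ((val e).1 == i) && ((val e).2 == j) || ((val e).1 == j) && ((val e).2 == i).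

Definition incident a e := ((val e).1 == a) || ((val e).2 == a).

Definition other_end a e := if (val e).1 == a then (val e).2 else (val e).1.

Lemma adj_eq w w' i j :
  (forall e, joins e i j -> w e = w' e) -> adj w i j = adj w' i j.
Proof.
move=> ww'; apply: eq_existsb => e; rewrite -/(joins e i j).
by case je: (joins e i j); rewrite ?andbF ?ww'.
Qed.

Lemma joins_other_end a e : incident a e -> joins e a (other_end a e).
Proof.
rewrite /incident /joins /other_end.
by case: eqVneq => [-> _|_ /= /eqP->]; rewrite !eqxx ?orbT.
Qed.

Lemma other_end_joins a u e : joins e a u -> other_end a e = u.
Proof. by rewrite /other_end => /orP[]/andP[/eqP-> /eqP->]; rewrite ?eqxx //; case: eqP. Qed.

Lemma incident_joins a u e : joins e a u -> incident a e.
Proof. by rewrite /incident => /orP[]/andP[/eqP-> /eqP->]; rewrite eqxx ?orbT. Qed.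

Lemma nbr_adj_eq w w' a U :
  (forall e, incident a e -> w e = w' e) -> nbr (adj w) a U = nbr (adj w') a U.
Proof.
move=> ww'; apply/setP => u; rewrite !inE; congr (_ && _).
by apply: adj_eq => e je; apply: ww'; apply: incident_joins je.
Qed.

Lemma explore_adj_eq w w' a A U : a \notin A :|: U ->
  (forall e, ~~ incident a e -> w e = w' e) ->
  explore (adj w) A U = explore (adj w') A U.
Proof.
move=> aAU ww'; apply: explore_eq_rel => x y xAU yU; apply: adj_eq => e je; apply: ww'.
have [xa ya] : x != a /\ y != a.
  by split; apply: contraNneq aAU => <-; rewrite // finset.in_setU yU orbT.
by move: je; rewrite /incident => /orP[]/andP[/eqP-> /eqP->]; rewrite negb_or ?xa ?ya.
Qed.

Lemma other_end_inj a : {in incident a &, injective (other_end a)}.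
Proof.
move=> e1 e2 ae1 ae2 E; apply: val_inj.
move: (joins_other_end ae1) (joins_other_end ae2); rewrite -E /joins.
move: (other_end a e1) (valP e1) (valP e2) => u.
case: (val e1) (val e2) => [x1 y1] [x2 y2] /= lt1 lt2.
move=> /orP[]/andP[/eqP ? /eqP ?] /orP[]/andP[/eqP ? /eqP ?]; subst => //;
  by have := ltn_trans lt1 lt2; rewrite ltnn.
Qed.

Definition edges_to a U := [set e | incident a e && (other_end a e \in U)].

Lemma nbr_adjE w a U :
  nbr (adj w) a U = other_end a @: [set e in edges_to a U | w e].
Proof.
apply/setP => u; rewrite inE; apply/andP/imsetP => [[uU /existsP[e /andP[we je]]]|].
  exists e; last by rewrite (other_end_joins je).
  by rewrite !inE we (incident_joins je) (other_end_joins je) uU.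
move=> [e]; rewrite !inE => /andP[/andP[ae uU] we] ->; split=> //.
by apply/existsP; exists e; rewrite we; apply: joins_other_end.
Qed.

Lemma card_nbr_adj w a U : #|nbr (adj w) a U| = #|[set e in edges_to a U | w e]|.
Proof.
rewrite nbr_adjE card_in_imset // => e1 e2.
by rewrite !inE => /andP[/andP[ae1 _] _] /andP[/andP[ae2 _] _]; apply: other_end_inj.
Qed.

Lemma card_edges_to a U : (#|edges_to a U| <= n)%N.
Proof.
have inj : {in edges_to a U &, injective (other_end a)}.
  by move=> e1 e2; rewrite !inE => /andP[ae1 _] /andP[ae2 _]; apply: other_end_inj.
by rewrite -(card_in_imset inj); apply: leq_trans (max_card _) _; rewrite card_ord.
Qed.

End CompleteGraph.

Lemma ln_le_subr1 (R : realType) (x : R) : 0 < x -> ln x <= x - 1.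
Proof. by move=> x0; have := @le_ln1Dx R (x - 1); rewrite subrKC; apply; lra. Qed.

Section ClusterExploration.
Variables (R : realType) (n : nat) (p : edge n -> R).
Hypothesis p01 : forall e, 0 <= p e <= 1.
Local Notation expect := (expect p).
Implicit Types (a : 'I_n) (A U N : {set 'I_n}).

Lemma expect_pow_nbr_le a U (t q : R) : 1 <= t -> 0 <= q -> (forall e, p e <= q) ->
  expect (fun w => t ^+ #|nbr (adj w) a U|) <= expR (q * (t - 1)) ^+ n.
Proof.
move=> t1 q0 pq; set E := edges_to a U; set x := expR (q * (t - 1)).
have x1 : 1 <= x by apply: le_trans (expR_ge1Dx _); rewrite lerDl mulr_ge0 ?subr_ge0.
have -> : (fun w => t ^+ #|nbr (adj w) a U|) =
    (fun w => \prod_e (if (e \in E) && w e then t else 1)).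
  apply: funext => w; rewrite card_nbr_adj -prodr_const big_mkcond /=.
  by apply: eq_bigr => e _; rewrite inE.
rewrite (expect_prod p (fun e b => if (e \in E) && b then t else 1)).
apply: le_trans (_ : \prod_e (if e \in E then x else 1) <= _).
  apply: ler_prod => e _; have /andP[p0 p1] := p01 e.
  case: (e \in E) => /=; last by rewrite !mulr1 subrKC lexx ler01.
  rewrite mulr1 addr_ge0 ?mulr_ge0 ?subr_ge0 ?(le_trans ler01 t1) //=.
  have -> : p e * t + (1 - p e) = 1 + p e * (t - 1) by ring.
  apply: le_trans (expR_ge1Dx _) _; rewrite ler_expR.
  by apply: ler_wpM2r; rewrite ?subr_ge0.
rewrite -big_mkcond prodr_const; exact: ler_weXn2l (card_edges_to a U).
Qed.

Lemma expect_explore_given_nbr a A U N (f : nat -> R) :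
  a \in A -> [disjoint A & U] -> N \subset U ->
  expect (fun w => (nbr (adj w) a U == N)%:R * f #|explore (adj w) A U|) =
  expect (fun w => (nbr (adj w) a U == N)%:R) *
  expect (fun w => f (#|N| + #|explore (adj w) (A :\ a :|: N) (U :\: N)|)%N).
Proof.
move=> aA dAU NU; have aU : a \notin U by rewrite (disjointFr dAU aA).
rewrite (expect_indicator_eq p (g := fun w =>
    f (#|N| + #|explore (adj w) (A :\ a :|: N) (U :\: N)|)%N)) => [|w <-]; last first.
  by rewrite (card_explore_step _ aA dAU).
apply: (expect_mul_indep p (D := incident a)) => w w' ww'.
  by rewrite (nbr_adj_eq _ ww').
rewrite (explore_adj_eq _ ww') // !finset.in_setU finset.in_setD1 eqxx /=.
rewrite finset.in_setD (negbTE aU) andbF orbF.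
by apply: contraNN aU => /(fintype.subsetP NU).
Qed.

Lemma expect_pow_explore_le (s h : R) : 0 <= s -> 0 <= h ->
  (forall a U, a \notin U -> expect (fun w => (s * h) ^+ #|nbr (adj w) a U|) <= h) ->
  forall A U, [disjoint A & U] ->
  expect (fun w => s ^+ #|explore (adj w) A U|) <= h ^+ #|A|.
Proof.
(* [#|A| + 2 * #|U|] decreases when [a] is retired and its neighbours [N] move
   from [U] to [A]. *)
move=> s0 h0 nbr_le A U; have [k] := ubnP (#|A| + 2 * #|U|).
elim: k A U => // k IHk A U ltk dAU.
have [->|[a aA]] := set_0Vmem A.
  by rewrite cards0 expr0 -(expect1 p); apply: ler_expect => // w; rewrite explore0 cards0.
have aU : a \notin U by rewrite (disjointFr dAU aA).
pose Nb w := nbr (adj w) a U.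
have NbU w : Nb w \subset U by apply: nbr_sub.
have cardA : #|A| = #|A :\ a|.+1 by rewrite (cardsD1 a A) aA.
rewrite cardA exprSr (expect_partition p (K := Nb) (P := fun N => N \subset U)) //.
apply: le_trans (ler_wpM2l (exprn_ge0 _ h0) (nbr_le a U aU)).
rewrite -expectZ (expect_partition p (K := Nb) (P := fun N => N \subset U)) //.
apply: ler_sum => N NU; rewrite expect_explore_given_nbr //.
rewrite (expect_indicator_eq p (g := fun=> h ^+ #|A :\ a| * (s * h) ^+ #|N|)) => [|w <-] //.
rewrite expectZr; apply: ler_wpM2l; first by apply: expect_ge0 => // w; rewrite ler0n.
under eq_fun => w do rewrite exprD.
rewrite expectZ exprMn mulrCA -exprD; apply: ler_wpM2l; first exact: exprn_ge0.
have dAU' : [disjoint A :\ a :|: N & U :\: N].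
  rewrite -setI_eq0; apply/eqP/setP => x; rewrite !inE.
  case xU: (x \in U); rewrite ?andbF ?andbT // (disjointFl dAU xU) andbF.
  by case: (x \in N).
have cardA' : #|A :\ a :|: N| = (#|A :\ a| + #|N|)%N.
  apply/eqP; rewrite (leq_card_setU _ _).2.
  exact: disjointWr NU (disjointWl (finset.subsetDl A [set a]) dAU).
rewrite -cardA'; apply: IHk dAU'.
have cardU' : #|U :\: N| = (#|U| - #|N|)%N by rewrite cardsD (finset.setIidPr NU).
have := subset_leq_card NU; move: ltk; rewrite cardA cardA' cardU'.
by move: #|A :\ a| #|N| #|U| => x y z; lia.
Qed.

Lemma expect_expR_cluster_le (c : R) v : 0 < c <= 1 -> (forall e, p e <= c / n%:R) ->
  expect (fun w => expR ((c - 1 - ln c) * #|open_cluster w v|%:R)) <= c^-1.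
Proof.
move=> /andP[c0 c1] pc; have n0 : n%:R != 0 :> R by case: n v => [[]|].
set d := c - 1 - ln c; set s := expR d; set h := expR (1 - c).
(* [s * h = 1/c], and [1/c] is the base for which one exploration step, a
   Binomial(n, c/n) variable, has moment at most [expR (1 - c) = h]. *)
have sh : s * h = c^-1.
  by rewrite -expRD (_ : d + (1 - c) = - ln c) ?expRN ?lnK // /d; ring.
have s1 : 1 <= s by rewrite -expR0 ler_expR subr_ge0 ln_le_subr1.
have explore_le : expect (fun w => s ^+ #|explore (adj w) [set v] (~: [set v])|) <= h.
  rewrite -[h]expr1 -(cards1 v); apply: expect_pow_explore_le.
  - exact: le_trans ler01 s1.
  - exact: expR_ge0.
  - move=> a U _; rewrite sh; apply: le_trans (expect_pow_nbr_le a U _ _ pc) _.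
    + by rewrite invr_ge1 ?unitfE ?gt_eqF.
    + by rewrite divr_ge0 ?ler0n ?ltW.
    rewrite -expRM_natl ler_expR le_eqVlt; apply/orP; left; apply/eqP; field.
    by rewrite n0 gt_eqF.
  by rewrite disjoints1 !inE eqxx.
apply: le_trans (_ : expect (fun w => s * s ^+ #|explore (adj w) [set v] (~: [set v])|) <= _).
  apply: ler_expect => // w; rewrite mulrC expRM_natl -exprS ler_weXn2l //.
  apply: leq_trans (subset_leq_card (cluster_sub_explore (adj w) v)) _.
  by rewrite cardsU1; case: (v \notin _).
by rewrite expectZ -sh; apply: ler_wpM2l => //; apply: le_trans ler01 s1.
Qed.

Lemma Prob_forall_le_ge (I : finType) (X : I -> config n -> R) (d L : R) : 0 <= d ->
  1 - \sum_i expect (fun w => expR (d * (X i w - L))) <=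
  Prob p (fun w => [forall i, X i w <= L]).
Proof.
move=> d0; rewrite (Prob_expect p) -expect_sum -expect1B; apply: ler_expect => // w.
have expR_ge0' i : 0 <= expR (d * (X i w - L)) by apply: expR_ge0.
case: (boolP [forall i, _]) => [_|]; first by rewrite gerBl sumr_ge0.
rewrite negb_forall => /existsP[i]; rewrite -ltNge => XiL.
rewrite subr_le0 (bigD1 i) //= -[X in X <= _]addr0 lerD ?sumr_ge0 //.
by rewrite -expR0 ler_expR mulr_ge0 // subr_ge0 ltW.
Qed.

Lemma Prob_small_clusters_ge (c M : R) : 0 < c <= 1 -> (forall e, p e <= c / n%:R) ->
  1 - n%:R `^ (1 - (c - 1 - ln c) * M) / c <=
  Prob p (fun w => [forall j : 'I_n, #|open_cluster w j|%:R <= M * ln n%:R]).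
Proof.
move=> c01 pc; have /andP[c0 _] := c01; set d := c - 1 - ln c; set L := M * ln n%:R.
have d0 : 0 <= d by rewrite subr_ge0 ln_le_subr1.
apply: le_trans (Prob_forall_le_ge (fun j w => #|open_cluster w j|%:R) L d0).
rewrite lerD2l lerN2.
apply: (@le_trans _ _ (\sum_(j : 'I_n) c^-1 * expR (- (d * L)))).
  apply: ler_sum => j _.
  rewrite (_ : (fun w => _) =
      fun w => expR (d * #|open_cluster w j|%:R) * expR (- (d * L))); last first.
    by apply: funext => w; rewrite -expRD mulrBr.
  by rewrite expectZr; apply: ler_wpM2r; [apply: expR_ge0 | apply: expect_expR_cluster_le].
rewrite sumr_const card_ord -[_ *+ n]mulr_natl mulrCA [leLHS]mulrC ler_pM2r ?invr_gt0 //.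
have [->|n0] := eqVneq n 0%N; first by rewrite mul0r powR_ge0.
rewrite /powR pnatr_eq0 (negbTE n0) -[X in X * _](lnK (x := n%:R)) ?posrE ?ltr0n ?lt0n //.
by rewrite -expRD ler_expR /L le_eqVlt; apply/orP; left; apply/eqP; ring.
Qed.

End ClusterExploration.

Section Asymptotics.
Variable R : realType.
Local Open Scope classical_set_scope.

Lemma exists_rate_right (C M theta : R) : 0 < C -> C < 1 ->
  theta < M * (C - 1 - ln C) - 1 ->
  exists2 c, C < c <= 1 & theta < M * (c - 1 - ln c) - 1.
Proof.
move=> C0 C1 thetaC.
have f_cont : {for C, continuous (fun c : R => M * (c - 1 - ln c) - 1)}.
  apply: cvgB; last exact: cvg_cst.
  apply: cvgM; first exact: cvg_cst.
  apply: cvgB; first by apply: cvgB; [exact: cvg_id | exact: cvg_cst].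
  exact: continuous_ln.
have : \forall c \near C^'+, [/\ C < c, c <= 1 & theta < M * (c - 1 - ln c) - 1].
  near=> c; split.
  - by near: c; exact: nbhs_right_gt.
  - by near: c; exact: nbhs_right_le.
  - near: c; apply: (cvgr_gt (f := fun c : R => M * (c - 1 - ln c) - 1)) thetaC.
    exact: cvg_at_right_filter f_cont.
by case/filter_ex => c [Cc c1 ?]; exists c; rewrite ?Cc.
Unshelve. all: by end_near.
Qed.

Lemma powR_div_le_eventually (a b c : R) : 0 < c -> a < b ->
  \forall n \near \oo, (n%:R : R) `^ a / c <= n%:R `^ b.
Proof.
move=> c0 ab; near=> n.
have n0 : 0 < n%:R :> R by rewrite ltr0n; near: n; exact: nbhs_infty_gt.
rewrite -[b](subrKC a) powRD; last by rewrite (gt_eqF n0) implybT.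
rewrite ler_pM2l ?powR_gt0 //.
rewrite /powR gt_eqF // -[c^-1]lnK ?posrE ?invr_gt0 // lnV ?posrE // ler_expR.
rewrite mulrC -ler_pdivrMr ?subr_gt0 // -[X in X <= _]expRK ler_ln ?posrE ?expR_gt0 //.
by near: n; exact: nbhs_infty_ger.
Unshelve. all: by end_near.
Qed.

End Asymptotics.

Local Open Scope classical_set_scope.
Local Open Scope ring_scope.

Theorem theorem1 (R : realType) (C : R) (alpha : nat -> R)
  (p : forall n : nat, edge n -> R) (M theta : R) :
  0 < C -> C < 1 ->
  (forall n, 0 <= alpha n) -> alpha @ \oo --> 0 ->
  (forall n (e : edge n), 0 <= p n e <= 1) ->
  (forall n (e : edge n), (C - alpha n) / n%:R <= p n e <= (C + alpha n) / n%:R) ->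
  1 / (C - 1 - ln C) < M ->
  theta < Num.min (M * (C - 1 - ln C) - 1) 1 ->
  exists L1 : R, 0 < L1 /\
    forall n : nat, L1 <= n%:R ->
      Prob (p n) (fun w : config n =>
        [forall j : 'I_n, (#|open_cluster w j|%:R <= M * ln (n%:R : R))]) >=
      1 - 1 / (n%:R `^ theta).
Proof.
move=> C0 C1 _ alpha_cvg p01 p_bounds _; rewrite lt_min => /andP[thetaC _].
have [c /andP[Cc c1] thetac] := exists_rate_right C0 C1 thetaC.
set d := c - 1 - ln c.
have ev : \forall n \near \oo,
    alpha n <= c - C /\ (n%:R : R) `^ (1 - d * M) / c <= n%:R `^ (- theta).
  near=> n; split; near: n.
  - by apply: (cvgr_le _ alpha_cvg); rewrite subr_gt0.
  - by apply: powR_div_le_eventually; [exact: lt_trans Cc | rewrite /d; lra].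
have [N _ HN] := ev.
exists (maxn N 1)%:R; split=> [|n]; first by rewrite ltr0n leq_max orbT.
rewrite ler_nat geq_max => /andP[/HN[alpha_n pow_n] _].
have pc e : p n e <= c / n%:R.
  have /andP[_ pe] := p_bounds n e; apply: le_trans pe _.
  by apply: ler_wpM2r; rewrite ?invr_ge0 // -lerBrDl.
have c01 : 0 < c <= 1 by rewrite (lt_trans C0 Cc) c1.
apply: le_trans (Prob_small_clusters_ge (p01 n) M c01 pc).
by rewrite lerD2l lerN2 div1r -powRN.
Unshelve. all: by end_near.
Qed.
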